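(* For every $\ell\in\mathbb{N}_+$, every $m\in\mathbb{N}$ and every canonical theory $T$ over a finite relational language $\mathcal{L}$, there exists $n\in\mathbb{N}$ such that for every (finite) model $M$ of $T$ and every $\ell$-split order $(f,\preceq)\in\mathcal{S}_{\ell,V(M)}$ with $\mathrm{thk}(f)\ge n$, there exist an $\ell$-Ramsey pattern $Q\in\mathcal{P}_{\ell,\mathcal{L}}$ and a set $W\subseteq V(M)$ such that $\mathrm{thk}(f|_W)\ge m$ and $M|_W$ is $Q$-uniform with respect to $(f|_W,\preceq_W)$. (That is, the $(\ell,T,m)$-Ramsey number $R_{\ell,T}(m)$, the least such $n$, is finite.)
   Context: A finite relational language $\mathcal{L}$ is a finite set of predicate symbols $P$ with arities $k(P)\in\mathbb{N}_+$. Structures are finite and canonical: no predicate holds on a tuple with a repeated entry. For a structure $M$, $V(M)$ is its vertex set, $(V)_k$ is the set of injective maps $[k]\to V$, $R_P(M)\subseteq(V(M))_{k(P)}$ is the set of tuples satisfying $P$, and $M|_W$ is the induced substructure on $W\subseteq V(M)$. A canonical theory is a universal theory entailing that each $P$ fails on tuples with repeated entries. For $\ell\in\mathbb{N}_+$ and a set $V$, an $\ell$-split order over $V$ is a pair $(f,\preceq)$ with $f\colon V\to[\ell]$ and $\preceq$ a (reflexive) partial order on $V$ such that two elements $v,w$ are $\preceq$-comparable iff $f(v)=f(w)$. $\mathcal{S}_{\ell,V}$ is the set of these and $\mathcal{S}_{\ell,k}=\mathcal{S}_{\ell,[k]}$. For a partial order $\preceq$ on $V$ and an injection $g\colon W\to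 V$, $\preceq_g$ is the partial order on $W$ with $w_1\preceq_g w_2\iff g(w_1)\preceq g(w_2)$; for $W\subseteq V$, $\preceq_W$ is the restriction of $\preceq$ to $W$. An $\ell$-Ramsey pattern on $\mathcal L$ is a map $Q$ assigning to each $P\in\mathcal{L}$ a set $Q_P\subseteq\mathcal{S}_{\ell,k(P)}$; $\mathcal{P}_{\ell,\mathcal L}$ is the set of these. A structure $M$ is $Q$-uniform with respect to $(f,\preceq)\in\mathcal{S}_{\ell,V(M)}$ if for every $P\in\mathcal L$, $R_P(M)=\{\alpha\in(V(M))_{k(P)}:(f\circ\alpha,\preceq_\alpha)\in Q_P\}$. The thickness of $f\colon V\to[\ell]$ is $\mathrm{thk}(f)=\min_{i\in[\ell]}|f^{-1}(i)|$. *)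

From mathcomp Require Import all_boot.
Set Implicit Arguments.
Unset Strict Implicit.
Unset Printing Implicit Defensive.

(* A finite relational language: a finType L of predicate symbols with
   arities k : L -> nat (positivity of arities is a hypothesis of the theorem).
   [k] is represented by 'I_k and [l] by 'I_l. *)

Record structure (L : finType) (k : L -> nat) := Structure {
  vert : finType;
  rel_of : forall P : L, pred {ffun 'I_(k P) -> vert}
}.
Arguments rel_of {L k} s P _.

Definition canonical_structure (L : finType) (k : L -> nat) (M : structure k) :=
  forall (P : L) (a : {ffun 'I_(k P) -> vert M}), rel_of M P a -> injective a.

Inductive qf (L : finType) (k : L -> nat) : Type :=
  | QEq : nat -> nat -> qf k
  | QRel : forall P : L, ('I_(k P) -> nat) -> qf k
  | QNot : qf k -> qf k
  | QAnd : qf k -> qf k -> qf k.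
Arguments QEq {L k} _ _.
Arguments QRel {L k} P _.
Arguments QNot {L k} _.
Arguments QAnd {L k} _ _.

Fixpoint qf_holds (L : finType) (k : L -> nat) (M : structure k)
    (e : nat -> vert M) (phi : qf k) : bool :=
  match phi with
  | QEq x y => e x == e y
  | QRel P a => rel_of M P [ffun i => e (a i)]
  | QNot psi => ~~ qf_holds e psi
  | QAnd psi chi => qf_holds e psi && qf_holds e chi
  end.

(* A universal sentence is the universal closure of a quantifier-free formula;
   M satisfies it iff the formula holds under every assignment. *)
Definition sat_univ (L : finType) (k : L -> nat) (M : structure k) (phi : qf k) :=
  forall e : nat -> vert M, qf_holds e phi.

Definition utheory (L : finType) (k : L -> nat) := qf k -> Prop.

Definition models (L : finType) (k : L -> nat) (M : structure k) (T : utheory k) :=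
  forall phi, T phi -> sat_univ M phi.

(* Semantic entailment (over finite structures; for universal sentences over a
   universal theory this coincides with entailment over all structures). *)
Definition entails (L : finType) (k : L -> nat) (T : utheory k) (phi : qf k) :=
  forall M : structure k, models M T -> sat_univ M phi.

Definition canon_axiom (L : finType) (k : L -> nat) (P : L) (i j : 'I_(k P)) : qf k :=
  QNot (QAnd (QRel P (fun t : 'I_(k P) => nat_of_ord t)) (QEq (nat_of_ord i) (nat_of_ord j))).

Definition canonical_theory (L : finType) (k : L -> nat) (T : utheory k) :=
  forall (P : L) (i j : 'I_(k P)), i != j -> entails T (canon_axiom i j).

Definition split_order (V : finType) (l : nat) (f : V -> 'I_l) (le : rel V) :=
  [/\ reflexive le, antisymmetric le, transitive le &
      forall v w, (le v w || le w v) = (f v == f w)].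

Definition thk_on (V : finType) (l : nat) (f : V -> 'I_l) (W : {set V}) : nat :=
  \big[minn/#|W|]_(i < l) #|[set v in W | f v == i]|.

Definition thk (V : finType) (l : nat) (f : V -> 'I_l) : nat := thk_on f setT.

(* An l-Ramsey pattern: for each P a set of l-split orders over [k(P)],
   the partial order being given by its graph as a set of pairs. *)
Definition pattern (L : finType) (k : L -> nat) (l : nat) :=
  forall P : L, {set {ffun 'I_(k P) -> 'I_l} * {set 'I_(k P) * 'I_(k P)}}.

Definition valid_pattern (L : finType) (k : L -> nat) (l : nat) (Q : pattern k l) :=
  forall (P : L) g r, (g, r) \in Q P ->
    split_order (fun i : 'I_(k P) => g i) (fun i j => (i, j) \in r).

Definition uniform_on (L : finType) (k : L -> nat) (l : nat) (M : structure k)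
    (Q : pattern k l) (f : vert M -> 'I_l) (le : rel (vert M)) (W : {set vert M}) :=
  forall (P : L) (a : {ffun 'I_(k P) -> vert M}),
    injective a -> (forall i, a i \in W) ->
    rel_of M P a =
      (([ffun i => f (a i)], [set ij | le (a ij.1) (a ij.2)]) \in Q P).
Arguments uniform_on {L k l} M Q f le W.

(* Combinatorial layer: a Ramsey theorem for set colourings relative to a
   partition of the vertices into l classes by f.  For all K and m there is N
   such that, whenever every class of S has at least N elements and the subsets
   of S are coloured, some H included in S with at least m elements in every
   class has the property that the colour of a K-subset of H depends only on
   its profile (the sizes of its intersections with the classes).  It is proved
   by induction on K: a greedy construction, choosing elements by increasing
   class and each time passing to a Ramsey set for B |-> c (x |: B), yields an
   end-homogeneous set, and a pigeonhole argument within each class finishes.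
   Iterating over the sizes 0, ..., Kmax gives homogeneity for all small sets.

   Model-theoretic layer: colour a vertex set B by the (predicate, order type)
   pairs realized by injective tuples enumerating B.  In a split order an
   injective tuple is determined by its set of entries and its order type, so
   homogeneity of this colouring for sets of size at most max k(P) on H makes
   M|_H uniform for the pattern of order types realized in H. *)

From mathcomp Require Import all_boot.
From mathcomp Require Import zify.
Set Implicit Arguments.
Unset Strict Implicit.
Unset Printing Implicit Defensive.

Section PartitionedRamsey.
Variables (l : nat) (C : finType).

Definition part (V : finType) (f : V -> 'I_l) (S : {set V}) (i : 'I_l) : {set V} :=
  [set v in S | f v == i].

Definition thick (V : finType) (f : V -> 'I_l) (N : nat) (S : {set V}) :=
  forall i, N <= #|part f S i|.

Definition profile (V : finType) (f : V -> 'I_l) (n : nat) (B : {set V}) :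
  {ffun 'I_l -> 'I_n.+1} := [ffun i => inord #|part f B i|].

Definition profile_homogeneous (V : finType) (f : V -> 'I_l) (c : {set V} -> C)
    (K : nat) (H : {set V}) :=
  exists col : {ffun 'I_l -> 'I_K.+1} -> C,
    forall B : {set V}, B \subset H -> #|B| = K -> c B = col (profile f K B).

Definition ramsey_property (K : nat) := forall m, exists N,
  forall (V : finType) (f : V -> 'I_l) (S : {set V}) (c : {set V} -> C),
  thick f N S ->
  exists2 H : {set V}, H \subset S & thick f m H /\ profile_homogeneous f c K H.

Section Parts.
Variables (V : finType) (f : V -> 'I_l).

Lemma card_part_le (B : {set V}) i : #|part f B i| <= #|B|.
Proof. by apply: subset_leq_card; apply/subsetP => v; rewrite inE => /andP[]. Qed.

Lemma card_partD1 (B : {set V}) x i : x \in B ->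
  #|part f (B :\ x) i| = #|part f B i| - (f x == i).
Proof.
move=> xB; have -> : part f (B :\ x) i = part f B i :\ x.
  by apply/setP => v; rewrite !inE; case: (v == x); rewrite ?andbF.
by rewrite [in RHS](cardsD1 x) !inE xB /=; case: (f x == i) => /=; lia.
Qed.

Lemma card_partU1 (X : {set V}) x i : x \notin X ->
  #|part f (x |: X) i| = (f x == i) + #|part f X i|.
Proof.
move=> xX; have -> : part f (x |: X) i = if f x == i then x |: part f X i else part f X i.
  apply/setP => v; case: ifP => E; rewrite !inE; case: (eqVneq v x) => [->|] //=.
  by rewrite E andbF.
by case: ifP => _ //; rewrite cardsU1 !inE (negbTE xX).
Qed.

Lemma profileE n (B : {set V}) i : #|B| <= n -> profile f n B i = #|part f B i| :> nat.
Proof. by move=> HB; rewrite ffunE inordK // ltnS (leq_trans (card_part_le _ _)). Qed.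

End Parts.

Lemma ramsey_property0 : ramsey_property 0.
Proof.
move=> m; exists m => V f S c HS; exists S => //; split => //.
by exists (fun _ => c set0) => B _ /eqP; rewrite cards_eq0 => /eqP ->.
Qed.

Definition end_homogeneous (V : finType) (f : V -> 'I_l) (c : {set V} -> C) (K : nat)
    (X : {set V}) (colx : V -> {ffun {ffun 'I_l -> 'I_K.+1} -> C}) :=
  forall B : {set V}, B \subset X -> #|B| = K.+1 ->
    exists2 x, x \in B & (forall y, y \in B -> f x <= f y) /\
                         c B = colx x (profile f K (B :\ x)).

Lemma end_homogeneous_add (V : finType) (f : V -> 'I_l) (c : {set V} -> C) K
    (x : V) (H X : {set V}) (col0 : {ffun 'I_l -> 'I_K.+1} -> C) colx :
  x \notin H -> X \subset H -> (forall y, y \in X -> f x <= f y) ->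
  (forall B : {set V}, B \subset H -> #|B| = K -> c (x |: B) = col0 (profile f K B)) ->
  end_homogeneous f c X colx ->
  end_homogeneous f c (x |: X) (fun y => if y == x then finfun col0 else colx y).
Proof.
move=> xH XH xmin Hcol0 Xend B BX HB.
have BxX : B :\ x \subset X.
  by apply/subsetP => y; rewrite !inE => /andP[yx /(subsetP BX)]; rewrite !inE (negbTE yx).
case: (boolP (x \in B)) => xB.
  exists x => //; split.
    move=> y yB; case: (eqVneq y x) => [-> //|yx].
    by apply: xmin; apply: (subsetP BxX); rewrite !inE yx.
  rewrite eqxx ffunE -Hcol0 ?setD1K //; first exact: subset_trans BxX XH.
  by move: HB; rewrite (cardsD1 x B) xB; lia.
have BX' : B \subset X.
  by apply: subset_trans BxX; apply/subsetP => y yB; rewrite !inE yB andbT;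
    apply: contraNneq xB => <-.
case: (Xend B BX' HB) => y yB [ymin Hy]; exists y => //; split => //.
by rewrite Hy ifN //; apply: contraNneq xB => <-.
Qed.

Lemma end_homogeneous_greedy K : ramsey_property K ->
  forall s : seq 'I_l, sorted (fun i j : 'I_l => i <= j) s ->
  exists N, forall (V : finType) (f : V -> 'I_l) (S : {set V}) (c : {set V} -> C),
  thick f N S ->
  exists (X : {set V}) (colx : V -> {ffun {ffun 'I_l -> 'I_K.+1} -> C}),
    [/\ X \subset S, forall i, count_mem i s <= #|part f X i|,
        forall x, x \in X -> f x \in s & end_homogeneous f c X colx].
Proof.
move=> RK; elim=> [|i s IH] Hs.
  exists 0 => V f S c _; exists set0, (fun _ => [ffun _ => c set0]).
  split=> [||x|B]; rewrite ?sub0set ?inE //.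
  by rewrite subset0 => /eqP ->; rewrite cards0.
have [N' HN'] := IH (path_sorted Hs).
have imin : all (fun j : 'I_l => i <= j) s.
  by apply: order_path_min Hs => a b d; apply: leq_trans.
have [N HN] := RK N'; exists N.+1 => V f S c HS.
have [x] : exists x, x \in part f S i.
  by apply/set0Pn; rewrite -card_gt0 (leq_trans _ (HS i)).
rewrite inE => /andP[xS /eqP fx].
have HSx : thick f N (S :\ x).
  by move=> j; rewrite card_partD1 //; move: (HS j); lia.
have [H HSx' [Hthick [col0 Hcol0]]] := HN V f (S :\ x) (fun B => c (x |: B)) HSx.
have [X [colx [XH Xcnt Xcls Xend]]] := HN' V f H c Hthick.
have xH : x \notin H by apply/negP => /(subsetP HSx'); rewrite !inE eqxx.
have xX : x \notin X by apply: contra xH; apply: (subsetP XH).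
exists (x |: X), (fun y => if y == x then finfun col0 else colx y); split.
- rewrite subUset sub1set xS (subset_trans XH) //.
  by apply: subset_trans HSx' _; apply/subsetP => y /setD1P[].
- by move=> j; rewrite card_partU1 // fx /=; move: (Xcnt j); case: (i == j) => /=; lia.
- by move=> y; rewrite !inE => /predU1P[-> | /Xcls ->]; rewrite ?fx ?eqxx ?orbT.
- apply: end_homogeneous_add xH XH _ Hcol0 Xend.
  by move=> y /Xcls fy; rewrite fx; apply: (allP imin).
Qed.

Lemma pigeonhole (V G : finType) (Y : {set V}) (h : V -> G) m :
  m * #|G| < #|Y| -> exists g, m <= #|[set y in Y | h y == g]|.
Proof.
move=> HY; apply/existsP; apply: contraLR HY; rewrite negb_exists -leqNgt => /forallP small.
have -> : #|Y| = \sum_(g : G) #|[set y in Y | h y == g]|.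
  rewrite -sum1_card (partition_big h xpredT) //=; apply: eq_bigr => g _.
  by rewrite -sum1_card; apply: eq_bigl => y; rewrite inE.
have fibre_lt g : #|[set y in Y | h y == g]| < m by rewrite ltnNge small.
by have := @leq_sum G (index_enum G) xpredT _ (fun=> m) (fun g _ => ltnW (fibre_lt g));
  rewrite sum_nat_const mulnC.
Qed.

Definition least_class n (d : {ffun 'I_l -> 'I_n.+1}) : option 'I_l :=
  [pick i | (0 < d i) && [forall j, (0 < d j) ==> (i <= j)]].

Definition remove_one n (d : {ffun 'I_l -> 'I_n.+2}) (i0 : 'I_l) : {ffun 'I_l -> 'I_n.+1} :=
  [ffun j => inord (d j - (i0 == j))].

Lemma least_class_profile (V : finType) (f : V -> 'I_l) n (B : {set V}) x :
  #|B| <= n -> x \in B -> (forall y, y \in B -> f x <= f y) ->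
  least_class (profile f n B) = Some (f x).
Proof.
move=> HB xB xmin.
have occ j : (0 < profile f n B j) = (part f B j != set0).
  by rewrite profileE // card_gt0.
have occ_ge j : 0 < profile f n B j -> f x <= j.
  by rewrite occ => /set0Pn[y]; rewrite inE => /andP[/xmin fy /eqP <-].
have occx : 0 < profile f n B (f x).
  by rewrite occ; apply/set0Pn; exists x; rewrite inE xB eqxx.
rewrite /least_class; case: pickP => [i /andP[occi /forallP imin] | none].
  congr Some; apply: val_inj; apply/eqP; rewrite eqn_leq occ_ge // andbT.
  exact: (implyP (imin (f x))).
move: (none (f x)); rewrite occx /=; move/negbT/forallPn => [j].
by rewrite negb_imply => /andP[/occ_ge ->].
Qed.

Lemma profileD1 (V : finType) (f : V -> 'I_l) K (B : {set V}) x :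
  #|B| = K.+1 -> x \in B ->
  profile f K (B :\ x) = remove_one (profile f K.+1 B) (f x).
Proof.
move=> HB xB; apply/ffunP => j; rewrite !ffunE; congr inord.
by rewrite inordK ?card_partD1 // ltnS -HB card_part_le.
Qed.

(* Inductive step: apply the greedy construction with m * #|G| + 1 elements
   of each class, G being the set of possible element colours, and keep in
   each class the elements of the most frequent element colour. *)
Lemma ramsey_propertyS K : ramsey_property K -> ramsey_property K.+1.
Proof.
move=> RK m.
pose G := {ffun {ffun 'I_l -> 'I_K.+1} -> C}.
pose t := (m * #|G|).+1.
pose s := sort (fun i j : 'I_l => i <= j) (flatten (nseq t (enum 'I_l))).
have s_sorted : sorted (fun i j : 'I_l => i <= j) s.
  by apply: sort_sorted => i j; apply: leq_total.
have count_s i : count_mem i s = t.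
  rewrite /s (permP (permEl (perm_sort _ _))); elim: (t) => //= n IH.
  by rewrite count_cat IH count_uniq_mem ?enum_uniq ?mem_enum.
have [N HN] := end_homogeneous_greedy RK s_sorted; exists N => V f S c HS.
have [X [colx [XS Xcnt _ Xend]]] := HN V f S c HS.
have /fin_all_exists[gam Hgam] : forall i : 'I_l,
    exists g : G, m <= #|[set y in part f X i | colx y == g]|.
  by move=> i; apply: pigeonhole; rewrite -/t -(count_s i) Xcnt.
pose H := [set x in X | colx x == gam (f x)].
have partH i : part f H i = [set y in part f X i | colx y == gam i].
  by apply/setP => y; rewrite !inE; case: (eqVneq (f y) i) => [<-|]; rewrite ?andbF ?andbT.
exists H; first by apply: subset_trans XS; apply/subsetP => y; rewrite inE => /andP[].
split; first by move=> i; rewrite partH.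
exists (fun d => if least_class d is Some i0 then gam i0 (remove_one d i0) else c set0).
move=> B BH HB.
have BX : B \subset X by apply: subset_trans BH _; apply/subsetP => y; rewrite inE => /andP[].
have [x xB [xmin ->]] := Xend B BX HB.
have /setIdP[_ /eqP ->] : x \in H by apply: (subsetP BH).
by rewrite (least_class_profile _ xB xmin) ?HB // profileD1.
Qed.

Lemma ramsey_property_all K : ramsey_property K.
Proof. by elim: K => [|K /ramsey_propertyS]; [exact: ramsey_property0 | ]. Qed.

Definition homogeneous_upto (V : finType) (f : V -> 'I_l) (c : {set V} -> C)
    (Kmax : nat) (H : {set V}) :=
  forall B B' : {set V}, B \subset H -> B' \subset H -> #|B| <= Kmax ->
    #|B| = #|B'| -> (forall i, #|part f B i| = #|part f B' i|) -> c B = c B'.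

Lemma profile_homogeneous_eq (V : finType) (f : V -> 'I_l) (c : {set V} -> C) K
    (H B B' : {set V}) :
  profile_homogeneous f c K H -> B \subset H -> B' \subset H ->
  #|B| = K -> #|B'| = K -> (forall i, #|part f B i| = #|part f B' i|) -> c B = c B'.
Proof.
move=> [col Hcol] BH B'H HB HB' Hparts; rewrite !Hcol //; congr col.
by apply/ffunP => i; rewrite !ffunE Hparts.
Qed.

Lemma ramsey_upto Kmax m : exists N,
  forall (V : finType) (f : V -> 'I_l) (S : {set V}) (c : {set V} -> C),
  thick f N S -> exists2 H : {set V}, H \subset S & thick f m H /\ homogeneous_upto f c Kmax H.
Proof.
elim: Kmax m => [|K IH] m.
  have [N HN] := ramsey_property_all 0 m; exists N => V f S c /(HN V f S c)[H HS [Hm Hhom]].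
  exists H => //; split => // B B' BH B'H; rewrite leqn0 => /eqP HB HBB' Hparts.
  exact: profile_homogeneous_eq Hhom BH B'H HB (etrans (esym HBB') HB) Hparts.
have [N1 HN1] := ramsey_property_all K.+1 m.
have [N HN] := IH N1; exists N => V f S c /(HN V f S c)[H1 H1S [H1m H1hom]].
have [H HH1 [Hm Hhom]] := HN1 V f H1 c H1m.
exists H; first exact: subset_trans HH1 H1S.
split=> // B B' BH B'H; rewrite leq_eqVlt ltnS => /orP[/eqP HB | HB] HBB' Hparts.
  exact: profile_homogeneous_eq Hhom BH B'H HB (etrans (esym HBB') HB) Hparts.
exact: H1hom (subset_trans BH HH1) (subset_trans B'H HH1) HB HBB' Hparts.
Qed.

End PartitionedRamsey.

Section Thickness.
Variables (V : finType) (l : nat) (f : V -> 'I_l) (W : {set V}).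

Lemma thk_on_le_part i : thk_on f W <= #|part f W i|.
Proof.
rewrite /thk_on; have : i \in index_enum 'I_l by rewrite mem_index_enum.
elim: (index_enum 'I_l) => [|j s IH] //; rewrite big_cons inE.
case/predU1P => [<- | /IH]; [exact: geq_minl | exact: leq_trans (geq_minr _ _)].
Qed.

Lemma thk_on_ge m : 0 < l -> thick f m W -> m <= thk_on f W.
Proof.
move=> l_gt0 Wm; apply: (big_ind (fun y => m <= y)) => [|x y mx my|i _].
- exact: leq_trans (Wm (Ordinal l_gt0)) (card_part_le _ _ _).
- by rewrite leq_min mx my.
- exact: Wm.
Qed.

End Thickness.

Section OrderTypes.
Variables (V : finType) (l : nat) (f : V -> 'I_l) (le : rel V).
Hypothesis split_le : split_order f le.

Definition tuple_set n (a : 'I_n -> V) : {set V} := [set a i | i : 'I_n].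

Lemma card_tuple_set n (a : 'I_n -> V) : injective a -> #|tuple_set a| = n.
Proof. by move=> a_inj; rewrite card_imset // card_ord. Qed.

Lemma card_filter_tuple_set n (a : 'I_n -> V) (P : pred V) : injective a ->
  #|[set z in tuple_set a | P z]| = #|[set p | P (a p)]|.
Proof.
move=> a_inj; rewrite -(card_imset _ a_inj); apply: eq_card => v.
rewrite !inE; apply/andP/imsetP => [[/imsetP[p _ ->] Pp] | [p]].
  by exists p; rewrite ?inE.
by rewrite inE => Pp ->; split; rewrite ?imset_f.
Qed.

Definition type_data n := ({ffun 'I_n -> 'I_l} * {set 'I_n * 'I_n})%type.

Definition order_type n (a : 'I_n -> V) : type_data n :=
  ([ffun i => f (a i)], [set ij | le (a ij.1) (a ij.2)]).

Lemma order_type_split n (a : 'I_n -> V) : injective a ->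
  split_order (fun i => (order_type a).1 i) (fun i j => (i, j) \in (order_type a).2).
Proof.
case: split_le => le_refl le_anti le_trans le_comp a_inj; split.
- by move=> i; rewrite inE le_refl.
- by move=> i j; rewrite !inE => /le_anti /a_inj.
- by move=> i j p; rewrite !inE; apply: le_trans.
- by move=> i j; rewrite !inE !ffunE le_comp.
Qed.

Lemma order_type_class n (a b : 'I_n -> V) :
  order_type a = order_type b -> forall q, f (a q) = f (b q).
Proof.
by move=> same_type q; have := congr1 (fun t : type_data n => t.1 q) same_type; rewrite /= !ffunE.
Qed.

Lemma rank_inj (A : {set V}) x y : x \in A -> y \in A -> le x y ->
  #|[set z in A | le z x]| = #|[set z in A | le z y]| -> x = y.
Proof.
case: split_le => le_refl le_anti le_trans _ xA yA lexy rank_eq.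
have below_sub : [set z in A | le z x] \subset [set z in A | le z y].
  by apply/subsetP => z; rewrite !inE => /andP[-> /le_trans]; apply.
have /eqP below_eq : [set z in A | le z x] == [set z in A | le z y].
  by rewrite eqEcard below_sub rank_eq /=.
have : y \in [set z in A | le z x] by rewrite below_eq inE yA le_refl.
by rewrite inE => /andP[_ leyx]; apply: le_anti; rewrite lexy leyx.
Qed.

Lemma tuple_eq_of_type n (a b : 'I_n -> V) : injective a -> injective b ->
  tuple_set a = tuple_set b -> order_type a = order_type b -> a =1 b.
Proof.
move=> a_inj b_inj same_set same_type p.
have same_class := order_type_class same_type.
have same_le q r : le (a q) (a r) = le (b q) (b r).
  by have := congr1 (fun t : type_data n => (q, r) \in t.2) same_type; rewrite /= !inE.
have same_rank : #|[set z in tuple_set a | le z (a p)]| =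
                 #|[set z in tuple_set a | le z (b p)]|.
  rewrite [in RHS]same_set !card_filter_tuple_set //.
  by apply: eq_card => q; rewrite !inE same_le.
have ap_in : a p \in tuple_set a by rewrite imset_f.
have bp_in : b p \in tuple_set a by rewrite same_set imset_f.
case: split_le => _ _ _ le_comp.
have /orP[le_ab | le_ba] : le (a p) (b p) || le (b p) (a p) by rewrite le_comp same_class.
  exact: rank_inj ap_in bp_in le_ab same_rank.
by apply/esym/(rank_inj bp_in ap_in le_ba); rewrite same_rank.
Qed.

End OrderTypes.

Section Uniformity.
Variables (L : finType) (k : L -> nat) (M : structure k) (l : nat).
Variables (f : vert M -> 'I_l) (le : rel (vert M)).
Hypothesis split_le : split_order f le.

Definition realized_types (B : {set vert M}) : {set {P : L & type_data l (k P)}} :=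
  [set x | [exists a : {ffun 'I_(k (tag x)) -> vert M},
    [&& injectiveb a, tuple_set a == B, order_type f le a == tagged x
      & rel_of M (tag x) a]]].

Definition realized_pattern (H : {set vert M}) : pattern k l := fun P =>
  [set t | [exists a : {ffun 'I_(k P) -> vert M},
    [&& injectiveb a, [forall i, a i \in H], order_type f le a == t & rel_of M P a]]].

Lemma realized_pattern_valid H : valid_pattern (realized_pattern H).
Proof.
move=> P g r; rewrite inE => /existsP[a /and4P[/injectiveP a_inj _ /eqP[<- <-] _]].
exact: order_type_split.
Qed.

(* If sets of size at most max k(P) with equal part sizes have the same
   realized types, then M|_H is uniform for the pattern realized in H:
   a tuple a of H with the order type of a tuple b satisfying P has its
   entries' set coloured like that of b, so some a' with the same entries
   and type as a satisfies P, and a' = a. *)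
Lemma uniform_realized_pattern H :
  homogeneous_upto f realized_types (\max_(P : L) k P) H ->
  uniform_on M (realized_pattern H) f le H.
Proof.
move=> Hhom P a a_inj aH; apply/idP/idP => [Pa | ].
  rewrite inE; apply/existsP; exists a; rewrite Pa eqxx !andbT.
  by apply/andP; split; [apply/injectiveP | apply/forallP].
rewrite /realized_pattern inE => /existsP[b /and4P[/injectiveP b_inj /forallP bH /eqP ba_type Pb]].
have {}ba_type : order_type f le b = order_type f le a := ba_type.
have tuple_setH (d : {ffun 'I_(k P) -> vert M}) :
    (forall i, d i \in H) -> tuple_set d \subset H.
  by move=> dH; apply/subsetP => v /imsetP[p _ ->].
have same_colour : realized_types (tuple_set b) = realized_types (tuple_set a).
  apply: Hhom; rewrite ?tuple_setH ?card_tuple_set ?leq_bigmax // => i.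
  rewrite /part !card_filter_tuple_set //; apply: eq_card => p.
  by rewrite !inE (order_type_class ba_type).
have : Tagged (fun P => type_data l (k P)) (order_type f le b) \in realized_types (tuple_set b).
  by rewrite inE; apply/existsP; exists b; rewrite /= !eqxx Pb !andbT; apply/injectiveP.
rewrite same_colour inE => /existsP[a' /and4P[/injectiveP a'_inj /eqP same_set /eqP a'_type Pa']].
suff -> : a = a' by [].
apply/ffunP => p; apply: (tuple_eq_of_type split_le) => //.
by rewrite a'_type.
Qed.

End Uniformity.

Theorem theorem2p2 :
  forall (L : finType) (k : L -> nat), (forall P : L, 0 < k P) ->
  forall (l : nat), 0 < l -> forall (m : nat) (T : utheory k),
  canonical_theory T ->
  exists n : nat,
    forall (M : structure k), models M T ->
    forall (f : vert M -> 'I_l) (le : rel (vert M)),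
      split_order f le -> n <= thk f ->
      exists (Q : pattern k l) (W : {set vert M}),
        valid_pattern Q /\ m <= thk_on f W /\ uniform_on M Q f le W.
Proof.
move=> L k _ l l_gt0 m T _.
have [N HN] := @ramsey_upto l {set {P : L & type_data l (k P)}} (\max_(P : L) k P) m.
exists N => M _ f le split_le thickM.
have thickV : thick f N [set: vert M].
  by move=> i; apply: leq_trans thickM (thk_on_le_part _ _ i).
have [H _ [Hm Hhom]] := HN (vert M) f setT (realized_types f le) thickV.
exists (realized_pattern f le H), H; split; first exact: realized_pattern_valid.
split; first exact: thk_on_ge.
exact: uniform_realized_pattern.
Qed.
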